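(* Let $m=2^k$ with $k\ge 2$, $\omega=e^{2\pi i/m}$, $F_m=\frac{1}{\sqrt m}(\omega^{jk})_{j,k=0}^{m-1}$, and $\alpha\in\mathbb{C}$. For $j\ge 0$ let $B_j=\frac{1}{\sqrt{1+|\alpha|^{2j}}}\begin{pmatrix}1&\alpha^j\\ \overline{\alpha}^j&-1\end{pmatrix}$. Let $J$ be the $m\times m$ permutation matrix with $J\ket{i}=\ket{2i}$ and $J\ket{m-1-i}=\ket{2i+1}$ for $0\le i<m/2$ (basis $\ket{0},\dots,\ket{m-1}$). Define $A=J^\dagger\left(B_{m/4}\otimes B_{m/8}\otimes\cdots\otimes B_2\otimes B_1\otimes B_0\right)JF_m^\dagger$. Let $\ket{\Psi}=\frac{1}{\sqrt\kappa}(1,\alpha,\alpha^2,\dots,\alpha^{m/2-1},\alpha^{m/2-1},\dots,\alpha,1)^T\in\mathbb{C}^m$ with $\kappa=2m(1+|\alpha|^2+|\alpha|^4+\cdots+|\alpha|^{m-2})$, and write $\ket{\Psi}=(v_1,\dots,v_m)^T$. Then $A$ is unitary and its first row equals $(\sqrt m\,v_1,\dots,\sqrt m\,v_m)F_m^\dagger$.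
   Context: The Kronecker product $B_{m/4}\otimes\cdots\otimes B_1\otimes B_0$ has $k$ factors $B_{2^{k-2}},\dots,B_2,B_1,B_0$, the leftmost factor acting on the most significant binary digit of the index $0,\dots,m-1$. *)

From HB Require Import structures.
From mathcomp Require Import all_boot all_order all_algebra.
From mathcomp Require Import complex sesquilinear spectral.
From mathcomp Require Import reals trigo.
Set Implicit Arguments. Unset Strict Implicit. Unset Printing Implicit Defensive.
Import Order.TTheory GRing.Theory Num.Theory.
Local Open Scope ring_scope.
Local Open Scope complex_scope.
Local Open Scope sesquilinear_scope.

Section Defs.
Variable R : realType.
Local Notation C := R[i].

Definition adjmx (m n : nat) (A : 'M[C]_(m, n)) : 'M[C]_(n, m) :=
  A ^t*.

Definition omega (m : nat) : C :=
  (cos (2 * pi / m%:R))%:C + 'i * (sin (2 * pi / m%:R))%:C.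

Definition Fmx (m : nat) : 'M[C]_m :=
  \matrix_(j < m, l < m) ((sqrtC (m%:R))^-1 * omega m ^+ (j * l)%N).

Definition Bmx (alpha : C) (j : nat) : 'M[C]_2 :=
  (sqrtC (1 + `|alpha| ^+ (2 * j)%N))^-1 *:
  \matrix_(r < 2, c < 2)
     (if (r == 0 :> nat) then (if (c == 0 :> nat) then 1 else alpha ^+ j)
      else (if (c == 0 :> nat) then (Num.conj alpha) ^+ j else -1)).

Definition bit (t i : nat) : 'I_2 := inord (odd (i %/ 2 ^ t)%N).

(* the subscript of the factor acting on binary digit t in
   B_{2^(k-2)} (x) ... (x) B_2 (x) B_1 (x) B_0 :
   digit 0 -> B_0, digit t >= 1 -> B_{2^(t-1)} *)
Definition bsub (t : nat) : nat := if t == 0%N then 0%N else (2 ^ t.-1)%N.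

(* The Kronecker product B_{m/4} (x) ... (x) B_1 (x) B_0 (k factors, m = 2^k,
   leftmost factor on the most significant binary digit), written entrywise:
   (X (x) Y)_{(i1 i2),(j1 j2)} = X_{i1 j1} Y_{i2 j2}. *)
Definition Kmx (alpha : C) (k : nat) : 'M[C]_(2 ^ k) :=
  \matrix_(i < 2 ^ k, j < 2 ^ k)
     \prod_(t < k) Bmx alpha (bsub t) (bit t i) (bit t j).

Definition sigma (m c : nat) : nat :=
  if (c < m./2)%N then (2 * c)%N else (2 * (m.-1 - c)).+1%N.

(* J |c> = |sigma c>, i.e. J_{r c} = [r = sigma c] *)
Definition Jmx (m : nat) : 'M[C]_m :=
  \matrix_(r < m, c < m) (if (r == sigma m c :> nat) then 1 else 0).

Definition Amx (alpha : C) (k : nat) : 'M[C]_(2 ^ k) :=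
  adjmx (Jmx (2 ^ k)) *m Kmx alpha k *m Jmx (2 ^ k) *m adjmx (Fmx (2 ^ k)).

Definition kappa (alpha : C) (m : nat) : C :=
  (2 * m)%N%:R * \sum_(t < m./2) `|alpha| ^+ (2 * t)%N.

(* Psi = 1/sqrt kappa (1, alpha, ..., alpha^(m/2-1), alpha^(m/2-1), ..., alpha, 1)^T,
   given as a row vector (v_1, ..., v_m) *)
Definition Psi (alpha : C) (m : nat) : 'rV[C]_m :=
  \row_(i < m) ((sqrtC (kappa alpha m))^-1 *
                (if (i < m./2)%N then alpha ^+ i else alpha ^+ (m.-1 - i)%N)).

End Defs.

From HB Require Import structures.
From mathcomp Require Import all_boot all_order all_algebra.
From mathcomp Require Import fingroup perm complex sesquilinear spectral.
From mathcomp Require Import reals trigo.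
From mathcomp Require Import ring zify.
Set Implicit Arguments.
Unset Strict Implicit.
Unset Printing Implicit Defensive.

Import Order.TTheory GRing.Theory Num.Theory.
Local Open Scope ring_scope.
Local Open Scope complex_scope.
Local Open Scope sesquilinear_scope.

(* A is a product of unitaries: the DFT matrix (omega is a primitive m-th root
   of unity), the permutation matrix J, and a Kronecker product of the 2x2
   unitaries B_j. For the first row, J fixes the index 0, so row 0 of
   J^dagger K J is row 0 of K with columns permuted by sigma. Each B_j has first
   row (1, alpha^j) / sqrt(1 + |alpha|^(2j)), so K_(0,n) = alpha^(n/2) times the
   normalisation prod_t (1 + |alpha|^(2 b_t))^(-1/2) = (2 sum_(s<m/2) |alpha|^(2s))^(-1/2)
   (b_t the subscript of the factor on digit t), and sigma(c)/2 is exactly the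
   exponent of alpha in the c-th entry of Psi. *)

Lemma sum_prim_root_expr (F : idomainType) (n d : nat) (z : F) :
  n.-primitive_root z ->
  \sum_(i < n) z ^+ (d * i) = if (n %| d)%N then n%:R else 0.
Proof.
move=> prim_z; under eq_bigr do rewrite exprM.
case: ifPn => [n_d | n_nd].
  rewrite (prim_order_dvd prim_z) in n_d; rewrite (eqP n_d).
  by under eq_bigr do rewrite expr1n; rewrite sumr_const card_ord.
have zd_n : (z ^+ d) ^+ n = 1 by rewrite -exprM mulnC exprM (prim_expr_order prim_z) expr1n.
have := subrX1 (z ^+ d) n; rewrite zd_n subrr => /esym/eqP.
by rewrite mulf_eq0 subr_eq0 -(prim_order_dvd prim_z) (negbTE n_nd) => /eqP.
Qed.

Section Fourier.
Variable R : realType.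
Local Notation C := R[i].

Lemma de_moivre (x : R) n :
  ((cos x)%:C + 'i * (sin x)%:C) ^+ n = (cos (x *+ n))%:C + 'i * (sin (x *+ n))%:C :> C.
Proof.
elim: n => [|n IH]; first by rewrite expr0 mulr0n cos0 sin0 mulr0 addr0.
rewrite exprS IH mulrS cosD sinD !rmorphD !rmorphM /= rmorphN.
set b := (sin x)%:C; set d := (sin (x *+ n))%:C.
apply/eqP; rewrite -subr_eq0; apply/eqP.
transitivity (('i ^+ 2 + 1) * (b * d)); first by ring.
by rewrite sqr_i addNr mul0r.
Qed.

Lemma omega_expr m n : omega R m ^+ n =
  (cos ((2 * pi / m%:R) *+ n))%:C + 'i * (sin ((2 * pi / m%:R) *+ n))%:C.
Proof. exact: de_moivre. Qed.

Lemma omega_expr_order m : (0 < m)%N -> omega R m ^+ m = 1.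
Proof.
move=> m_gt0; rewrite omega_expr -mulr_natr divfK ?pnatr_eq0 -?lt0n //.
by rewrite mulr_natl cos2pi sin2pi mulr0 addr0.
Qed.

Lemma omega_expr_half k : (0 < k)%N -> omega R (2 ^ k) ^+ (2 ^ k.-1) = -1.
Proof.
move=> k_gt0; rewrite omega_expr -mulr_natr.
have -> : 2 * pi / (2 ^ k)%:R * (2 ^ k.-1)%:R = pi :> R.
  have h_neq0 : (2 ^ k.-1)%:R != 0 :> R by rewrite pnatr_eq0 expn_eq0.
  by rewrite -{1}(prednK k_gt0) expnS natrM; field.
by rewrite cospi sinpi mulr0 addr0 rmorphN.
Qed.

(* The order of [omega] divides [2 ^ k], so it is a power of 2; a proper one
   would divide [2 ^ k.-1], contradicting [omega ^+ (2 ^ k.-1) = -1]. *)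
Lemma omega_prim_root k : (0 < k)%N -> (2 ^ k).-primitive_root (omega R (2 ^ k)).
Proof.
move=> k_gt0; have m_gt0 : (0 < 2 ^ k)%N by rewrite expn_gt0.
have [d prim_d] := prim_order_exists m_gt0 (omega_expr_order m_gt0).
case/(dvdn_pfactor _ _ (isT : prime 2)) => e e_le d_eq; rewrite {d}d_eq in prim_d.
have [e_lt | k_le] := ltnP e k; last by rewrite {1}(_ : k = e) //; lia.
have : omega R (2 ^ k) ^+ (2 ^ k.-1) = 1.
  have -> : (2 ^ k.-1 = 2 ^ e * 2 ^ (k.-1 - e))%N by rewrite -expnD subnKC // -ltnS prednK.
  by rewrite exprM (prim_expr_order prim_d) expr1n.
rewrite omega_expr_half // => /eqP; rewrite -subr_eq0 -opprD oppr_eq0.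
by rewrite (_ : 1 + 1 = 2%:R) // pnatr_eq0.
Qed.

Lemma omega_conj m : (0 < m)%N -> Num.conj (omega R m) = omega R m ^+ m.-1.
Proof.
move=> m_gt0.
have omega_mulC : omega R m * Num.conj (omega R m) = 1.
  have real_conj (x : R) : Num.conj (x%:C : C) = x%:C := conjc_real x.
  rewrite /omega rmorphD rmorphM /= !real_conj.
  have -> : Num.conj ('i : C) = - 'i by apply/eqP; rewrite eq_complex /= oppr0 !eqxx.
  set a := cos _; set b := sin _.
  have -> : (a%:C + 'i * b%:C) * (a%:C + - 'i * b%:C) = a%:C ^+ 2 - 'i ^+ 2 * b%:C ^+ 2
    by ring.
  by rewrite sqr_i -!rmorphXn /= mulN1r opprK -rmorphD /= cos2Dsin2.
by rewrite -[RHS]mulr1 -omega_mulC mulrA -exprSr prednK // omega_expr_order // mul1r.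
Qed.

Lemma Fmx_unitary m : m.-primitive_root (omega R m) -> Fmx R m \is unitarymx.
Proof.
(* With [conj omega = omega ^+ m.-1], entry [(j, l)] of [F *m F^t*] is a sum of
   powers of [omega ^+ d] with [d = j - l (mod m)]. *)
move=> prim_omega; have m_gt0 := prim_order_gt0 prim_omega.
apply/unitarymxP/matrixP => j l; rewrite !mxE.
set s := sqrtC (m%:R : C).
have s_conj : Num.conj s^-1 = s^-1 by rewrite geC0_conj // invr_ge0 sqrtC_ge0 ler0n.
have s_sqr : s^-1 * s^-1 = (m%:R)^-1 by rewrite -invfM -expr2 sqrtCK.
set d := (j + m.-1 * l)%N.
under eq_bigr => n _.
  rewrite !mxE rmorphM rmorphXn /= s_conj omega_conj // -!exprM -/s mulrACA s_sqr.
  rewrite -exprD (_ : (j * n + m.-1 * (l * n) = d * n)%N); last by rewrite mulnDl mulnA.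
  over.
rewrite -mulr_sumr sum_prim_root_expr //.
have d_mod : (d + l = l * m + j)%N by rewrite /d -addnA -mulSnr prednK // mulnC addnC.
suff -> : (m %| d)%N = (j == l) by case: eqP; rewrite ?mulr0 // mulVf ?pnatr_eq0 -?lt0n.
apply/idP/eqP => [m_d | jl].
  apply: val_inj => /=; rewrite -(modn_small (ltn_ord j)) -(modn_small (ltn_ord l)).
  by rewrite -(modnMDl l j) -d_mod -modnDml (eqP m_d).
by rewrite /d jl -{1}(mul1n l) -mulnDl add1n prednK // dvdn_mulr.
Qed.

End Fourier.

Lemma adjmx_perm_mx (C : numClosedFieldType) n (s : 'S_n) :
  (perm_mx s : 'M[C]_n)^t* = perm_mx s^-1%g.
Proof. by rewrite tr_perm_mx map_perm_mx. Qed.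

Lemma perm_mx_unitary (C : numClosedFieldType) n (s : 'S_n) :
  (perm_mx s : 'M[C]_n) \is unitarymx.
Proof. by apply/unitarymxP; rewrite adjmx_perm_mx -perm_mxM mulgV perm_mx1. Qed.

Lemma sigma_double h c :
  sigma h.*2 c = if (c < h)%N then c.*2 else (h.*2.-1 - c).*2.+1.
Proof. by rewrite /sigma doubleK !mul2n. Qed.

Section Interleave.
Variable m : nat.
Hypothesis m_even : ~~ odd m.

Lemma sigma_lt c : (c < m)%N -> (sigma m c < m)%N.
Proof. rewrite -(even_halfK m_even) sigma_double; case: ifP; lia. Qed.

Lemma sigma_inj c c' : (c < m)%N -> (c' < m)%N -> sigma m c = sigma m c' -> c = c'.
Proof. rewrite -(even_halfK m_even) !sigma_double; do 2!case: ifP; lia. Qed.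

Definition sigma_ord (c : 'I_m) : 'I_m := Ordinal (sigma_lt (ltn_ord c)).

Lemma sigma_ord_inj : injective sigma_ord.
Proof. by move=> c c' /(congr1 val) /sigma_inj eq_cc'; apply/val_inj/eq_cc'. Qed.

Definition sigma_perm : 'S_m := perm sigma_ord_inj.

Variable R : realType.

Lemma Jmx_perm : Jmx R m = perm_mx sigma_perm^-1%g.
Proof.
apply/matrixP => r c; rewrite !mxE (canF_eq (permKV sigma_perm)) permE.
by rewrite -val_eqE /=; case: (_ == _).
Qed.

Lemma Jmx_unitary : Jmx R m \is unitarymx.
Proof. by rewrite Jmx_perm perm_mx_unitary. Qed.

Lemma Jmx_conjugate (M : 'M[R[i]]_m) :
  adjmx (Jmx R m) *m M *m Jmx R m = col_perm sigma_perm (row_perm sigma_perm M).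
Proof. by rewrite Jmx_perm /adjmx adjmx_perm_mx invgK -row_permE -col_permE. Qed.

End Interleave.

Lemma bitE t n : val (bit t n) = odd (n %/ 2 ^ t).
Proof. by apply: inordK; rewrite ltnS leq_b1. Qed.

Lemma sum_bits k n : (n < 2 ^ k)%N -> (\sum_(t < k) 2 ^ t * odd (n %/ 2 ^ t))%N = n.
Proof.
elim: k n => [|k IH] n n_lt; first by rewrite big_ord0; move: n_lt; rewrite expn0; lia.
rewrite big_ord_recl expn0 divn1 mul1n.
under eq_bigr => t _ do rewrite lift0 expnS divnMA -mulnA.
rewrite -big_distrr IH; last by rewrite ltn_divLR // mulnC -expnS.
by rewrite /= divn2 mul2n odd_double_half.
Qed.

Lemma bits_inj k (n n' : 'I_(2 ^ k)) : (forall t : 'I_k, bit t n = bit t n') -> n = n'.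
Proof.
move=> eq_bits; apply: val_inj.
rewrite /= -(@sum_bits k n) // -(@sum_bits k n') //.
by apply: eq_bigr => t _; rewrite -!bitE eq_bits.
Qed.

(* [n |-> (bit t n)_t] is a bijection onto the bit vectors [{ffun 'I_k -> 'I_2}]. *)
Lemma sum_prod_bits (S : comPzSemiRingType) k (G : 'I_k -> 'I_2 -> S) :
  \sum_(n < 2 ^ k) \prod_(t < k) G t (bit t n) = \prod_(t < k) \sum_(b < 2) G t b.
Proof.
pose bits (n : 'I_(2 ^ k)) : {ffun 'I_k -> 'I_2} := [ffun t : 'I_k => bit t n].
have bits_bij : bijective bits.
  apply: inj_card_bij; last by rewrite card_ffun !card_ord.
  by move=> n n' /ffunP eq_nn'; apply: bits_inj => t; have := eq_nn' t; rewrite !ffunE.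
rewrite bigA_distr_bigA (reindex bits) /=; last exact: onW_bij.
by apply: eq_bigr => n _; apply: eq_bigr => t _; rewrite ffunE.
Qed.

Definition kronmx {S : pzSemiRingType} {k} (U : 'I_k -> 'M[S]_2) : 'M[S]_(2 ^ k) :=
  \matrix_(i, j) \prod_(t < k) U t (bit t i) (bit t j).

Lemma kronmx_unitary (C : numClosedFieldType) k (U : 'I_k -> 'M[C]_2) :
  (forall t, U t \is unitarymx) -> kronmx U \is unitarymx.
Proof.
move=> U_unitary; apply/unitarymxP/matrixP => i j; rewrite !mxE.
have U_rows t x y : \sum_b U t x b * Num.conj (U t y b) = (x == y)%:R.
  move/matrixP/(_ x y): (unitarymxP (U_unitary t)); rewrite !mxE => <-.
  by apply: eq_bigr => b _; rewrite !mxE.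
under eq_bigr do rewrite !mxE rmorph_prod -big_split /=.
rewrite (@sum_prod_bits _ k (fun t b => U t (bit t i) b * Num.conj (U t (bit t j) b))).
under eq_bigr do rewrite U_rows.
have [-> | neq_ij] := eqVneq i j; first by rewrite big1 // => t _; rewrite eqxx.
case: (boolP [forall t : 'I_k, bit t i == bit t j]) => [/forallP eq_bits | /forallPn [t neq_t]].
  by case/eqP: neq_ij; apply: bits_inj => t; apply/eqP.
by rewrite (bigD1 t) //= (negbTE neq_t) mul0r.
Qed.

Section Blocks.
Variable R : realType.
Local Notation C := R[i].

Lemma Bmx_unitary (alpha : C) j : Bmx alpha j \is unitarymx.
Proof.
apply/unitarymxP/matrixP => r s; rewrite !mxE !big_ord_recl big_ord0 !mxE.
set N := 1 + `|alpha| ^+ (2 * j)%N; set c := (sqrtC N)^-1.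
rewrite -!rmorphXn; set x := alpha ^+ j.
have N_gt0 : 0 < N by rewrite ltr_pwDl // exprn_ge0.
have c_conj : Num.conj c = c by rewrite geC0_conj // invr_ge0 sqrtC_ge0 ltW.
have c_normalizes : c * c * (1 + x * Num.conj x) = 1.
  by rewrite -normCK normrX -exprM mulnC -/N -invfM -expr2 sqrtCK mulVf ?gt_eqF.
case: r => [[|[|r]]] // r_lt; case: s => [[|[|s]]] // s_lt /=;
  rewrite !rmorphM /= ?rmorphN ?rmorph1 ?conjCK c_conj.
- by rewrite -[RHS]c_normalizes; ring.
- by ring.
- by ring.
- by rewrite -[RHS]c_normalizes; ring.
Qed.

Lemma Kmx_unitary (alpha : C) k : Kmx alpha k \is unitarymx.
Proof. exact: kronmx_unitary (fun t => Bmx_unitary alpha (bsub t)). Qed.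

End Blocks.

Lemma sqrtC_prod (C : numClosedFieldType) (I : Type) (r : seq I) (F : I -> C) :
  (forall i, 0 <= F i) -> \prod_(i <- r) sqrtC (F i) = sqrtC (\prod_(i <- r) F i).
Proof.
move=> F_ge0; elim: r => [|a r IH]; first by rewrite !big_nil sqrtC1.
by rewrite !big_cons IH sqrtCM // nnegrE ?F_ge0 // prodr_ge0.
Qed.

(* [bsub] doubles from digit 1 on, so each factor doubles the range of the
   geometric sum. *)
Lemma prod_bsub_geom (S : comPzSemiRingType) (x : S) k :
  \prod_(t < k.+1) (1 + x ^+ bsub t) = 2%:R * \sum_(s < 2 ^ k) x ^+ s.
Proof.
elim: k => [|k IH].
  by rewrite big_ord1 big_ord1 expr0 mulr1.
rewrite big_ord_recr IH /= /bsub /= expnS mul2n -addnn big_split_ord /=.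
rewrite -mulrA mulrDr mulr1 mulr_suml; congr (_ * (_ + _)).
by apply: eq_bigr => s _; rewrite exprD mulrC.
Qed.

Lemma sum_bsub_bits k n : (n < 2 ^ k.+1)%N ->
  (\sum_(t < k.+1) bsub t * odd (n %/ 2 ^ t))%N = (n %/ 2)%N.
Proof.
move=> n_lt; rewrite big_ord_recl mul0n add0n -(@sum_bits k (n %/ 2)).
  by apply: eq_bigr => t _; rewrite lift0 /bsub /= expnS divnMA.
by rewrite ltn_divLR // mulnC -expnS.
Qed.

Lemma sigma_half m c : (sigma m c %/ 2 = if (c < m./2)%N then c else m.-1 - c)%N.
Proof.
rewrite /sigma; case: ifP => _; first by rewrite mulKn.
by rewrite -addn1 mulnC divnMDl // divn_small // addn0.
Qed.

Section FirstRow.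
Variable R : realType.
Local Notation C := R[i].
Variables (alpha : C) (k : nat).

Lemma Kmx_row0 (i0 n : 'I_(2 ^ k.+1)) : val i0 = 0%N ->
  Kmx alpha k.+1 i0 n =
  (sqrtC (2 * \sum_(s < 2 ^ k) `|alpha| ^+ (2 * s)))^-1 * alpha ^+ (n %/ 2).
Proof.
move=> i0_eq0; rewrite mxE.
have B_row0 t : Bmx alpha (bsub t) (bit t i0) (bit t n) =
    (sqrtC (1 + (`|alpha| ^+ 2) ^+ bsub t))^-1 * alpha ^+ (bsub t * odd (n %/ 2 ^ t)).
  rewrite !mxE !bitE i0_eq0 div0n /= -exprM mulnC.
  by case: odd; rewrite ?muln1 ?muln0 ?expr0 ?mulr1.
under eq_bigr do rewrite B_row0.
rewrite big_split /= prodrXr sum_bsub_bits //.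
rewrite prodfV sqrtC_prod => [|t]; last by rewrite addr_ge0 // !exprn_ge0.
by rewrite prod_bsub_geom; under [in RHS]eq_bigr do rewrite exprM.
Qed.

Lemma Kmx_conj_row0 (i0 : 'I_(2 ^ k.+1)) : val i0 = 0%N ->
  row i0 (adjmx (Jmx R (2 ^ k.+1)) *m Kmx alpha k.+1 *m Jmx R (2 ^ k.+1)) =
  sqrtC ((2 ^ k.+1)%N%:R) *: Psi alpha (2 ^ k.+1).
Proof.
move=> i0_eq0; set m := (2 ^ k.+1)%N.
have m_even : ~~ odd m by rewrite oddX.
have half_m : m./2 = (2 ^ k)%N by rewrite /m expnS mul2n doubleK.
have sigma_i0 : val (sigma_ord m_even i0) = 0%N.
  by rewrite /= /sigma i0_eq0 half_m expn_gt0.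
rewrite Jmx_conjugate; apply/rowP => c.
rewrite 3![in LHS]mxE !permE (Kmx_row0 _ sigma_i0) /= sigma_half half_m.
rewrite !mxE -fun_if half_m mulrA; congr (_ * _).
set S := \sum_(s < 2 ^ k) _.
have S_ge0 : 0 <= 2 * S by rewrite mulr_ge0 ?ler0n // sumr_ge0 // => s _; rewrite exprn_ge0.
rewrite /kappa half_m -/S natrM mulrAC [_ * m%:R]mulrC.
rewrite (@sqrtCM _ m%:R) ?nnegrE ?ler0n // invfM mulrA mulfV ?mul1r //.
by rewrite sqrtC_eq0 pnatr_eq0 expn_eq0.
Qed.

End FirstRow.

Theorem mainTheorem6 (R : realType) (k : nat) (alpha : R[i]) :
  (2 <= k)%N ->
  Amx alpha k \is unitarymx /\
  (forall i0 : 'I_(2 ^ k), val i0 = 0%N ->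
     row i0 (Amx alpha k) =
     (sqrtC ((2 ^ k)%N%:R) *: Psi alpha (2 ^ k)%N) *m adjmx (Fmx R (2 ^ k)%N)).
Proof.
case: k => [//|k] _; split; last by move=> i0 i0_eq0; rewrite /Amx row_mul Kmx_conj_row0.
have m_even : ~~ odd (2 ^ k.+1) by rewrite oddX.
rewrite /Amx /adjmx !mul_unitarymx ?trmxC_unitary ?Jmx_unitary ?Kmx_unitary //.
exact/Fmx_unitary/omega_prim_root.
Qed.
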